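(* Let $A,B\in\mathrm{SL}_2\mathbb{Z}$ be noncommuting, well oriented, with $2\le\mathrm{tr}(A)<\mathrm{tr}(B)$. Then for all words $w,u$ (possibly empty): (1) $[w]<[u]$ if and only if $[w]\le[u]-1$; (2) if $u$ is a subword of $w$, then $[u]<[w]$, except in the case in which $A$ is parabolic and $w$ is a power of $a$.
   Context: Words are finite (possibly empty) strings over $\{a,b\}$; $\phi$ is the monoid homomorphism with $\phi(a)=A$, $\phi(b)=B$, and $[w]=\mathrm{tr}(\phi(w))$ (so the empty word has $[\,]=2$). A subword of $w$ is a possibly empty word obtained from $w$ by deleting one or more not necessarily contiguous letters. $A$ is parabolic if $\mathrm{tr}(A)=2$. Fixed points are for the Möbius action on $\partial\mathcal{H}=\mathbb{P}^1\mathbb{R}$; $\alpha^\pm$ ($\beta^\pm$) are the attracting/repelling fixed points of $A$ ($B$), both equal to the unique fixed point if parabolic. With $\partial\mathcal{H}$ cyclically ordered and $[\alpha,\beta]$ the closed counterclockwise interval from $\alpha$ to $\beta$, let $I^+=\{\alpha^+\}$ if $\alpha^+=\beta^+$, and otherwise the one of $[\alpha^+,\beta^+],[\beta^+,\alpha^+]$ mapped into itself by both $A$ and $B$ (if it exists); define $I^-$ likewise with $A^{-1},B^{-1},\alpha^-,\beta^-$. The pair is coherently oriented if both exist, and well oriented if $A,B$ is coherently oriented but $A,B^{-1}$ is not. *)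

From HB Require Import structures.
From mathcomp Require Import all_boot all_order all_algebra.
From Stdlib Require Import Reals.
From mathcomp Require Import Rstruct.
Set Implicit Arguments. Unset Strict Implicit. Unset Printing Implicit Defensive.
Import Order.TTheory GRing.Theory Num.Theory.
Local Open Scope ring_scope.

Definition mat := 'M[int]_2.
Definition inSL2Z (A : mat) : Prop := \det A = 1.

Definition letter := bool.
Definition la : letter := true.
Definition lb : letter := false.
Definition word := seq letter.

Definition phi (A B : mat) (w : word) : mat :=
  foldr (fun l M => (if l then A else B) *m M) 1%:M w.

Definition trw (A B : mat) (w : word) : int := \tr (phi A B w).

Definition subword (u w : word) : Prop := subseq u w /\ u != w.

Definition parabolic (A : mat) : Prop := \tr A = 2.

(* The boundary P^1(R) = R u {oo}: [Some x] is the real x, [None] is oo. *)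
Definition pt := option R.

Definition rmat (A : mat) : 'M[R]_2 := map_mx (fun z : int => z%:~R) A.

Definition proj (v : 'cV[R]_2) : pt :=
  if v 1 0 == 0 then None else Some (v 0 0 / v 1 0).

Definition hvec (p : pt) : 'cV[R]_2 :=
  match p with
  | Some x => \col_i (if i == 0 then x else 1)
  | None => \col_i (if i == 0 then 1 else 0)
  end.

Definition mob (A : mat) (p : pt) : pt := proj (rmat A *m hvec p).

Definition fixedpt (A : mat) (p : pt) : Prop := mob A p = p.

Definition attr (A : mat) (p : pt) : Prop :=
  (parabolic A /\ forall q, fixedpt A q <-> q = p) \/
  (exists (v : 'cV[R]_2) (lam : R),
      v != 0 /\ rmat A *m v = lam *: v /\ 1 < `|lam| /\ p = proj v).

Definition rep (A : mat) (p : pt) : Prop :=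
  (parabolic A /\ forall q, fixedpt A q <-> q = p) \/
  (exists (v : 'cV[R]_2) (lam : R),
      v != 0 /\ rmat A *m v = lam *: v /\ `|lam| < 1 /\ p = proj v).

(* Cyclic order of P^1(R): go along R increasingly, then through oo. *)
Definition le_pt (p q : pt) : bool :=
  match p, q with
  | Some x, Some y => (x <= y)%O
  | _, None => true
  | None, Some _ => false
  end.

(* closed counterclockwise interval [x, y] *)
Definition in_arc (x y z : pt) : bool :=
  if le_pt x y then le_pt x z && le_pt z y else le_pt x z || le_pt z y.

Definition arc_inv (F G : mat) (x y : pt) : Prop :=
  forall z, in_arc x y z -> in_arc x y (mob F z) /\ in_arc x y (mob G z).

Definition I_exists (P Q : pt -> Prop) (F G : mat) : Prop :=
  exists x y, P x /\ Q y /\ (x = y \/ arc_inv F G x y \/ arc_inv F G y x).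

Definition coherently_oriented (A B : mat) : Prop :=
  I_exists (attr A) (attr B) A B /\
  I_exists (rep A) (rep B) (invmx A) (invmx B).

Definition well_oriented (A B : mat) : Prop :=
  coherently_oriented A B /\ ~ coherently_oriented A (invmx B).

From HB Require Import structures.
From mathcomp Require Import all_boot all_order all_algebra.
From Stdlib Require Import Reals.
From mathcomp Require Import Rstruct.
From mathcomp Require Import ring lra zify.
Import Order.TTheory GRing.Theory Num.Theory.
Local Open Scope ring_scope.

Set Implicit Arguments.
Unset Strict Implicit.
Unset Printing Implicit Defensive.

(* Traces of words in an SL_2 pair (A, B) are polynomials in x = tr A, y = tr B
   and z = tr AB.  Put p = x - 2, q = y - 2 and r = z - x - y + 2, which is
   tr ((A - 1) (B - 1)).  When p >= 0, q > 0, r > 0 and r^2 >= 4pq, the same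
   traces are realised by a pair 1 + P, 1 + Q with P, Q entrywise nonnegative
   (pick rho > 0 with rho + pq/rho = r).  For such a pair, deleting letters of a
   word can only decrease the entries of its matrix, and it strictly decreases
   the trace unless only letters of a parabolic A are deleted.
   Well-orientedness gives these inequalities.  If A has eigenvalues l, 1/l and
   B has m, 1/m, then z - (lm + 1/(lm)) has the sign of minus a product S of
   2x2 determinants of fixed points (for parabolic A, z - y has the sign of a
   similar product); with the wrong sign, the fixed points of A and of B^-1
   would bound arcs invariant under both maps, making A, B^-1 coherently
   oriented.  The bound r^2 >= 4pq then reduces to the AM-GM inequality. *)

(** * Traces of words in 2x2 matrices *)

Section TwoByTwo.
Context {T : comRingType}.
Implicit Types A B : 'M[T]_2.

Lemma sum_ord2 (V : nmodType) (F : 'I_2 -> V) : \sum_(i < 2) F i = F 0 + F 1.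
Proof. by rewrite !big_ord_recl big_ord0 addr0; congr (F _ + F _); apply/val_inj. Qed.

Lemma mxtrace2 A : \tr A = A 0 0 + A 1 1.
Proof. exact: sum_ord2. Qed.

Lemma mulmx2E A B i j : (A *m B) i j = A i 0 * B 0 j + A i 1 * B 1 j.
Proof. by rewrite mxE sum_ord2. Qed.

Lemma det_mx2 A : \det A = A 0 0 * A 1 1 - A 0 1 * A 1 0.
Proof.
rewrite (expand_det_row _ 0) sum_ord2 /cofactor !det_mx11 !mxE /=.
rewrite expr0 expr1 !mul1r.
have -> : lift 0 0 = 1 :> 'I_2 by apply/val_inj.
have -> : lift 1 0 = 0 :> 'I_2 by apply/val_inj.
ring.
Qed.

Lemma ord2_ind (P : 'I_2 -> Prop) : P 0 -> P 1 -> forall i, P i.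
Proof.
move=> P0 P1 [[|[|//]] lti].
  by rewrite (_ : Ordinal lti = 0) //; exact/val_inj.
by rewrite (_ : Ordinal lti = 1) //; exact/val_inj.
Qed.

Lemma matrix2P A B :
  A 0 0 = B 0 0 -> A 0 1 = B 0 1 -> A 1 0 = B 1 0 -> A 1 1 = B 1 1 -> A = B.
Proof. by move=> e00 e01 e10 e11; apply/matrixP; apply: ord2_ind; apply: ord2_ind. Qed.

Lemma mx2_cayley_hamilton A : A *m A = \tr A *: A - \det A *: 1%:M.
Proof. by apply: matrix2P; rewrite !(mulmx2E, mxE, mxtrace2, det_mx2) /=; ring. Qed.

Section Traces.
Variables A B W : 'M[T]_2.

Lemma mxtrace2_mulAA : \tr (A *m (A *m W)) = \tr A * \tr (A *m W) - \det A * \tr W.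
Proof. by rewrite !(mxtrace2, mulmx2E, det_mx2); ring. Qed.

Lemma mxtrace2_mulBA : \tr (B *m (A *m W)) =
  \tr A * \tr (B *m W) + \tr B * \tr (A *m W) + (\tr (A *m B) - \tr A * \tr B) * \tr W
  - \tr (A *m B *m W).
Proof. by rewrite !(mxtrace2, mulmx2E); ring. Qed.

Lemma mxtrace2_mulABA : \tr (A *m B *m (A *m W)) =
  \tr (A *m B) * \tr (A *m W) - \det A * \tr B * \tr W + \det A * \tr (B *m W).
Proof. by rewrite !(mxtrace2, mulmx2E, det_mx2); ring. Qed.

Lemma mxtrace2_mulABB : \tr (A *m B *m (B *m W)) =
  \tr B * \tr (A *m B *m W) - \det B * \tr (A *m W).
Proof. by rewrite !(mxtrace2, mulmx2E, det_mx2); ring. Qed.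

End Traces.

End TwoByTwo.

Definition wmx {T : pzRingType} {n} (A B : 'M[T]_n) (w : word) : 'M[T]_n :=
  foldr (fun l M => (if l then A else B) *m M) 1%:M w.

Lemma wmx_cat (T : pzRingType) n (A B : 'M[T]_n) w1 w2 :
  wmx A B (w1 ++ w2) = wmx A B w1 *m wmx A B w2.
Proof. by elim: w1 => [|l w1 IH] /=; rewrite ?mul1mx // IH mulmxA. Qed.

Fixpoint word_traces {T : pzRingType} (x y z : T) (w : word) : T * T * T * T :=
  match w with
  | [::] => (2, x, y, z)
  | l :: w' =>
    let: (t, tA, tB, tAB) := word_traces x y z w' in
    if l then (tA, x * tA - t, x * tB + y * tA + (z - x * y) * t - tAB, z * tA - y * t + tB)
    else (tB, tAB, y * tB - t, y * tAB - tA)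
  end.

Lemma word_tracesE (T : comRingType) (A B : 'M[T]_2) w :
  \det A = 1 -> \det B = 1 ->
  word_traces (\tr A) (\tr B) (\tr (A *m B)) w =
  (\tr (wmx A B w), \tr (A *m wmx A B w), \tr (B *m wmx A B w), \tr (A *m B *m wmx A B w)).
Proof.
move=> dA dB; elim: w => [|[] w /= ->]; first by rewrite /= !mulmx1 mxtrace1.
  by rewrite mxtrace2_mulAA mxtrace2_mulBA mxtrace2_mulABA dA !mul1r.
by rewrite mxtrace2_mulAA mxtrace2_mulABB dB !mul1r mulmxA.
Qed.

Lemma mxtrace_wmx_eq (T : comRingType) (A B A' B' : 'M[T]_2) w :
  \det A = 1 -> \det B = 1 -> \det A' = 1 -> \det B' = 1 ->
  \tr A = \tr A' -> \tr B = \tr B' -> \tr (A *m B) = \tr (A' *m B') ->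
  \tr (wmx A B w) = \tr (wmx A' B' w).
Proof.
move=> dA dB dA' dB' eA eB eAB.
by have := @word_tracesE _ _ _ w dA dB; rewrite eA eB eAB word_tracesE // => -[].
Qed.

Lemma map_wmx (T T' : pzRingType) (f : {rmorphism T -> T'}) n (A B : 'M[T]_n) w :
  map_mx f (wmx A B w) = wmx (map_mx f A) (map_mx f B) w.
Proof. by elim: w => [|l w IH] /=; rewrite ?map_mx1 // map_mxM IH; case: l. Qed.

(** * Words in matrices with nonnegative entries *)

Section NonnegMatrices.
Context {T : numDomainType}.

Definition nonneg_mx m n (M : 'M[T]_(m, n)) := forall i j, 0 <= M i j.

Lemma nonneg_mxD m n (M N : 'M[T]_(m, n)) : nonneg_mx M -> nonneg_mx N -> nonneg_mx (M + N).
Proof. by move=> hM hN i j; rewrite mxE addr_ge0. Qed.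

Lemma nonneg_mxM m n p (M : 'M[T]_(m, n)) (N : 'M[T]_(n, p)) :
  nonneg_mx M -> nonneg_mx N -> nonneg_mx (M *m N).
Proof. by move=> hM hN i j; rewrite mxE sumr_ge0 // => k _; rewrite mulr_ge0. Qed.

Lemma nonneg_mx1 {n} : nonneg_mx (1%:M : 'M[T]_n).
Proof. by move=> i j; rewrite mxE ler0n. Qed.

Lemma mxtrace_ge0 n (M : 'M[T]_n) : nonneg_mx M -> 0 <= \tr M.
Proof. by move=> hM; rewrite sumr_ge0. Qed.

Lemma mxtrace_mul_le n (P M N : 'M[T]_n) :
  nonneg_mx P -> nonneg_mx (M - N) -> \tr (P *m N) <= \tr (P *m M).
Proof. by move=> hP hMN; rewrite -subr_ge0 -linearB -mulmxBr; apply/mxtrace_ge0/nonneg_mxM. Qed.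

End NonnegMatrices.

Lemma nonneg_mx_ge1 (T : numDomainType) n (M : 'M[T]_n) : nonneg_mx (M - 1%:M) -> nonneg_mx M.
Proof. by move=> hM; rewrite -(subrK 1%:M M); apply: nonneg_mxD hM nonneg_mx1. Qed.

Lemma proper_subseq_split (T : eqType) (u w : seq T) : subseq u w -> u != w ->
  exists w1 x w2, w = w1 ++ x :: w2 /\ subseq u (w1 ++ w2).
Proof.
elim: w u => [|y w IH] [|x u] //=; first by exists [::], y, w; rewrite sub0seq.
case: eqP => [<- sub neq|_ sub _]; last by exists [::], y, w.
have [|w1 [z [w2 [-> sub']]]] := IH u sub; first by apply: contraNneq neq => ->.
by exists (x :: w1), z, w2; rewrite /= eqxx.
Qed.

Lemma mxtrace_wmx_insert (T : comRingType) n (A B : 'M[T]_n) w1 l w2 :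
  \tr (wmx A B (w1 ++ l :: w2)) =
  \tr (wmx A B (w1 ++ w2)) + \tr (((if l then A else B) - 1%:M) *m wmx A B (w2 ++ w1)).
Proof.
rewrite !wmx_cat /=; set X := if l then A else B.
rewrite -[in LHS](subrK 1%:M X) mulmxDl mul1mx mulmxDr linearD addrC /=.
by congr (_ + _); rewrite mulmxA mxtrace_mulC mulmxA [RHS]mxtrace_mulC.
Qed.

Section WordMonotonicity.
Context {T : numDomainType} {n : nat}.
Variables A B : 'M[T]_n.
Hypotheses (A_ge1 : nonneg_mx (A - 1%:M)) (B_ge1 : nonneg_mx (B - 1%:M)).

Let letter_ge1 l : nonneg_mx ((if l then A else B) - 1%:M). Proof. by case: l. Qed.

Let mulmx_subE (X M N : 'M[T]_n) : X *m M - N = (X - 1%:M) *m M + (M - N).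
Proof. by rewrite mulmxBl mul1mx addrA subrK. Qed.

Lemma wmx_ge1 w : nonneg_mx (wmx A B w - 1%:M).
Proof.
elim: w => [|l w IH] /=; first by rewrite subrr => i j; rewrite mxE.
by rewrite mulmx_subE; exact: nonneg_mxD (nonneg_mxM (letter_ge1 l) (nonneg_mx_ge1 IH)) IH.
Qed.

Lemma wmx_subseq_le u w : subseq u w -> nonneg_mx (wmx A B w - wmx A B u).
Proof.
elim: w u => [|y w IH] [|x u] //= => [_|_|]; first by rewrite subrr => i j; rewrite mxE.
  exact: (wmx_ge1 (y :: w)).
case: eqP => [<- sub|_ sub].
  by rewrite -mulmxBr; exact: nonneg_mxM (nonneg_mx_ge1 (letter_ge1 x)) (IH _ sub).
rewrite mulmx_subE; apply: nonneg_mxD (IH _ sub).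
exact: nonneg_mxM (letter_ge1 y) (nonneg_mx_ge1 (wmx_ge1 w)).
Qed.

Hypotheses (trB : n%:R < \tr B) (trAB : 0 < \tr ((A - 1%:M) *m B)).

Lemma mxtrace_wmx_subseq_lt u w : n%:R < \tr A \/ lb \in w ->
  subseq u w -> u != w -> \tr (wmx A B u) < \tr (wmx A B w).
Proof.
move=> trA_or_b sub neq; have [w1 [x [w2 [Ew sub']]]] := proper_subseq_split sub neq.
(* Deleting the letter [x] lowers the trace by tr ((X - 1) M) with M >= 1, and
   M >= B when b occurs in [w]. *)
rewrite Ew mxtrace_wmx_insert; apply: ltr_pwDr.
  set M := wmx A B (w2 ++ w1).
  have M_ge1 : nonneg_mx (M - 1%:M) by exact: wmx_ge1.
  case: x Ew => Ew.
    case: trA_or_b => [trA | b_in_w].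
      apply: lt_le_trans (mxtrace_mul_le A_ge1 M_ge1).
      by rewrite mulmx1 linearB /= mxtrace1 subr_gt0.
    have sub_b : subseq [:: lb] (w2 ++ w1).
      by move: b_in_w; rewrite sub1seq Ew !mem_cat inE; case: (lb \in w1); case: (lb \in w2).
    by apply: lt_le_trans (mxtrace_mul_le A_ge1 (wmx_subseq_le sub_b)); rewrite /= mulmx1.
  apply: lt_le_trans (mxtrace_mul_le B_ge1 M_ge1).
  by rewrite mulmx1 linearB /= mxtrace1 subr_gt0.
by rewrite -subr_ge0 -linearB; apply/mxtrace_ge0/wmx_subseq_le.
Qed.

End WordMonotonicity.

Lemma mxtrace_mulB1 (T : comRingType) n (A B : 'M[T]_n) :
  \tr ((A - 1%:M) *m (B - 1%:M)) = \tr (A *m B) - \tr A - \tr B + n%:R.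
Proof. by rewrite mulmxBl mulmxBr !mul1mx mulmx1 !linearB /= mxtrace1 opprB addrA addrAC. Qed.

Definition mx2 {T : pzRingType} (a b c d : T) : 'M[T]_2 :=
  \matrix_(i, j) if i == 0 then if j == 0 then a else b else if j == 0 then c else d.

Section NonnegModel.
Context {T : realFieldType}.
Variables (p q rho : T).
Hypotheses (p_ge0 : 0 <= p) (q_gt0 : 0 < q) (rho_gt0 : 0 < rho).

Let P := mx2 p rho (p / rho) 0.
Let Q := mx2 0 q 1 q.

Lemma nonneg_model : nonneg_mx P /\ nonneg_mx Q.
Proof.
have pr_ge0 : 0 <= p / rho by rewrite divr_ge0 // ltW.
by split; apply: ord2_ind; apply: ord2_ind; rewrite mxE //= ltW.
Qed.

Lemma model_invariants :
  [/\ \det (P + 1%:M) = 1, \det (Q + 1%:M) = 1, \tr P = p, \tr Q = q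
    & \tr (P *m Q) = rho + p * q / rho].
Proof.
have rho_neq0 : rho != 0 by rewrite gt_eqF.
rewrite !(det_mx2, mxtrace2, mulmx2E, mxE) /=.
by split; field.
Qed.

End NonnegModel.

Lemma exists_root_sum (T : rcfType) (r pq : T) : 0 < r -> 4 * pq <= r ^+ 2 ->
  exists2 rho, 0 < rho & rho + pq / rho = r.
Proof.
move=> r_gt0 disc; set s := Num.sqrt (r ^+ 2 - 4 * pq); set rho := (r + s) / 2.
have s2 : s ^+ 2 = r ^+ 2 - 4 * pq by rewrite sqr_sqrtr // subr_ge0.
have rho_gt0 : 0 < rho by rewrite divr_gt0 // ltr_pwDl ?sqrtr_ge0.
have root : rho * rho - r * rho + pq = 0.
  have -> : rho * rho - r * rho + pq = (s ^+ 2 - (r ^+ 2 - 4 * pq)) / 4 by rewrite /rho; field.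
  by rewrite s2 subrr mul0r.
exists rho => //; apply: (mulIf (lt0r_neq0 rho_gt0)).
rewrite mulrDl divfK ?lt0r_neq0 //; lra.
Qed.

Lemma sl2_nonneg_realization (T : rcfType) (A B : 'M[T]_2) :
  \det A = 1 -> \det B = 1 -> 2 <= \tr A -> 2 < \tr B ->
  0 < \tr ((A - 1%:M) *m (B - 1%:M)) ->
  4 * (\tr A - 2) * (\tr B - 2) <= \tr ((A - 1%:M) *m (B - 1%:M)) ^+ 2 ->
  exists A0 B0 : 'M[T]_2, [/\ nonneg_mx (A0 - 1%:M), nonneg_mx (B0 - 1%:M),
    \det A0 = 1, \det B0 = 1
    & [/\ \tr A0 = \tr A, \tr B0 = \tr B & \tr (A0 *m B0) = \tr (A *m B)]].
Proof.
move=> dA dB trA trB r_gt0; rewrite -mulrA => disc.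
set p := \tr A - 2; set q := \tr B - 2.
have p_ge0 : 0 <= p by rewrite subr_ge0.
have q_gt0 : 0 < q by rewrite subr_gt0.
have [rho rho_gt0 Er] := exists_root_sum r_gt0 disc.
have [P_ge0 Q_ge0] := nonneg_model p_ge0 q_gt0 rho_gt0.
have [dA0 dB0 trP trQ trPQ] := model_invariants p q rho_gt0.
set A0 := mx2 p rho (p / rho) 0 + 1%:M; set B0 := mx2 0 q 1 q + 1%:M.
have [trA0 trB0] : \tr A0 = \tr A /\ \tr B0 = \tr B.
  by rewrite !linearD /= mxtrace1 trP trQ !subrK.
exists A0, B0; rewrite /A0 /B0 !addrK -/A0 -/B0; split=> //; split=> //.
have := mxtrace_mulB1 A0 B0; have := mxtrace_mulB1 A B.
by rewrite trA0 trB0 /A0 /B0 !addrK trPQ Er /p /q; lra.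
Qed.

Theorem sl2_mxtrace_wmx_subseq_lt (T : rcfType) (A B : 'M[T]_2) u w :
  \det A = 1 -> \det B = 1 -> 2 <= \tr A -> 2 < \tr B ->
  0 < \tr ((A - 1%:M) *m (B - 1%:M)) ->
  4 * (\tr A - 2) * (\tr B - 2) <= \tr ((A - 1%:M) *m (B - 1%:M)) ^+ 2 ->
  2 < \tr A \/ lb \in w -> subseq u w -> u != w -> \tr (wmx A B u) < \tr (wmx A B w).
Proof.
move=> dA dB trA trB r_gt0 disc trA_or_b sub neq.
have [A0 [B0 [A0_ge1 B0_ge1 dA0 dB0 [eA eB eAB]]]] :=
  sl2_nonneg_realization dA dB trA trB r_gt0 disc.
rewrite -!(mxtrace_wmx_eq _ dA0 dB0 dA dB eA eB eAB).
apply: mxtrace_wmx_subseq_lt => //; rewrite ?eA ?eB //.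
rewrite mulmxBl mul1mx linearB /= eAB eB; have := mxtrace_mulB1 A B; lra.
Qed.

(** * The projective line and fixed points *)

Lemma rmatM (X Y : mat) : rmat (X *m Y) = rmat X *m rmat Y.
Proof. exact: map_mxM. Qed.

Lemma rmat1 : rmat 1%:M = 1%:M.
Proof. exact: map_mx1. Qed.

Lemma mxtrace_rmat (X : mat) : \tr (rmat X) = (\tr X)%:~R.
Proof. exact: trace_map_mx. Qed.

Lemma trw_rmat (A B : mat) w : (trw A B w)%:~R = \tr (wmx (rmat A) (rmat B) w).
Proof. by rewrite /trw -mxtrace_rmat /rmat -map_wmx. Qed.

Lemma parabolic_rmat (X : mat) : parabolic X <-> \tr (rmat X) = 2.
Proof.
rewrite /parabolic mxtrace_rmat; split=> [-> // | /eqP].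
by rewrite -[2]/((2 : int)%:~R) eqr_int => /eqP.
Qed.

Lemma det_rmat1 (X : mat) : inSL2Z X -> \det (rmat X) = 1.
Proof. by move=> dX; rewrite det_map_mx dX. Qed.

Lemma unitmx_rmat (F : mat) : inSL2Z F -> rmat F \in unitmx.
Proof. by move=> dF; rewrite unitmxE det_rmat1 ?unitr1. Qed.

Lemma rmat_invmx (X : mat) : inSL2Z X -> rmat (invmx X) = invmx (rmat X).
Proof.
move=> dX; have uX : X \in unitmx by rewrite unitmxE dX unitr1.
by rewrite -[LHS](mulmxK (unitmx_rmat dX)) -rmatM mulVmx // rmat1 mul1mx.
Qed.

Lemma inSL2Z_invmx (X : mat) : inSL2Z X -> inSL2Z (invmx X).
Proof. by move=> dX; rewrite /inSL2Z det_inv dX invr1. Qed.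

Section Cross.
Context {T : comRingType}.
Implicit Types (u v w e : 'cV[T]_2) (M : 'M[T]_2).

Lemma col2P u v : u 0 0 = v 0 0 -> u 1 0 = v 1 0 -> u = v.
Proof. by move=> e0 e1; apply/matrixP => i j; rewrite (ord1 j); move: i; apply: ord2_ind. Qed.

Lemma mulmx_col2E M v i : (M *m v) i 0 = M i 0 * v 0 0 + M i 1 * v 1 0.
Proof. by rewrite mxE sum_ord2. Qed.

Definition cross u v := u 0 0 * v 1 0 - u 1 0 * v 0 0.

Definition orient u w v := cross u w * cross w v * cross v u.

Lemma crossZl c u v : cross (c *: u) v = c * cross u v.
Proof. by rewrite /cross !mxE; ring. Qed.

Lemma crossZr c u v : cross u (c *: v) = c * cross u v.
Proof. by rewrite /cross !mxE; ring. Qed.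

Lemma cross_anti u v : cross v u = - cross u v.
Proof. by rewrite /cross; ring. Qed.

Lemma orientZ c u w v : orient u (c *: w) v = c ^+ 2 * orient u w v.
Proof. by rewrite /orient crossZl crossZr; ring. Qed.

Lemma orient_swap u w v : orient u w v = - orient v w u.
Proof. by rewrite /orient /cross; ring. Qed.

Lemma cross_addZr e u c : cross e (u + c *: e) = cross e u.
Proof. by rewrite /cross !mxE; ring. Qed.

Lemma cross_decomp e (e' w : 'cV[T]_2) : cross e e' *: w = cross w e' *: e + cross e w *: e'.
Proof. by apply: col2P; rewrite !mxE /cross; ring. Qed.

End Cross.

Lemma col2_neq0 (T : comRingType) (v : 'cV[T]_2) : v != 0 -> v 0 0 != 0 \/ v 1 0 != 0.
Proof.
move=> v_neq0; case: (eqVneq (v 0 0) 0) => [v0|]; last by left.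
case: (eqVneq (v 1 0) 0) => [v1|]; last by right.
by case/eqP: v_neq0; apply: col2P; rewrite mxE.
Qed.

Section Eigenvectors.
Context {T : fieldType}.
Implicit Types (M : 'M[T]_2) (v w e : 'cV[T]_2).

Lemma eigen_char2 M v l : v != 0 -> M *m v = l *: v -> l ^+ 2 - \tr M * l + \det M = 0.
Proof.
move=> v_neq0 Mv; apply/eqP; move: v_neq0; apply: contraNT => neq0.
have := congr1 (mulmx^~ v) (mx2_cayley_hamilton M).
rewrite -mulmxA Mv -scalemxAr Mv scalerA mulmxBl -!scalemxAl Mv mul1mx scalerA.
rewrite -scalerBl => /eqP; rewrite -subr_eq0 -scalerBl scaler_eq0 => /orP[|//].
suff -> : l * l - (\tr M * l - \det M) = l ^+ 2 - \tr M * l + \det M by rewrite (negbTE neq0).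
by ring.
Qed.

Lemma eigen_sum_prod M v v' l l' : v != 0 -> v' != 0 ->
  M *m v = l *: v -> M *m v' = l' *: v' -> l != l' -> l + l' = \tr M /\ l * l' = \det M.
Proof.
move=> v_neq0 v'_neq0 Mv Mv' neq.
have c := eigen_char2 v_neq0 Mv; have c' := eigen_char2 v'_neq0 Mv'.
have sum : l + l' = \tr M.
  have : (l - l') * (l + l' - \tr M) = 0.
    have -> : (l - l') * (l + l' - \tr M) =
      (l ^+ 2 - \tr M * l + \det M) - (l' ^+ 2 - \tr M * l' + \det M) by ring.
    by rewrite c c' subrr.
  by move/eqP; rewrite mulf_eq0 !subr_eq0 (negbTE neq) => /eqP.
by split=> //; apply: (addrI (l ^+ 2 - \tr M * l)); rewrite c -sum; ring.
Qed.

Lemma eigen_invmx M v l : M \in unitmx -> M *m v = l *: v -> l != 0 -> invmx M *m v = l^-1 *: v.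
Proof.
move=> uM Mv l_neq0.
by rewrite -[RHS](mulKmx uM) -scalemxAr Mv scalerA mulVf // scale1r.
Qed.

Lemma transvection_invmx M e k : M \in unitmx ->
  (forall w, M *m w = w + (k * cross e w) *: e) ->
  forall w, invmx M *m w = w + (- k * cross e w) *: e.
Proof.
move=> uM Mw w; set w' := invmx M *m w.
have Ew : w = w' + (k * cross e w') *: e by rewrite -Mw mulKVmx.
have -> : cross e w = cross e w' by rewrite Ew cross_addZr.
by rewrite Ew -addrA -scalerDl mulNr addrN scale0r addr0.
Qed.

End Eigenvectors.

Section EigenTraces.
Context {T : comRingType}.
Implicit Types (M : 'M[T]_2) (e f : 'cV[T]_2).

Lemma mx2_eigen_entries M e (e' : 'cV[T]_2) l l' : M *m e = l *: e -> M *m e' = l' *: e' ->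
  [/\ cross e e' * M 0 0 = l * e 0 0 * e' 1 0 - l' * e' 0 0 * e 1 0,
      cross e e' * M 0 1 = (l' - l) * e 0 0 * e' 0 0,
      cross e e' * M 1 0 = (l - l') * e 1 0 * e' 1 0
    & cross e e' * M 1 1 = l' * e' 1 0 * e 0 0 - l * e 1 0 * e' 0 0].
Proof.
move=> Me Me'.
have col0 i : cross e e' * M i 0 = e' 1 0 * (M *m e) i 0 - e 1 0 * (M *m e') i 0.
  by rewrite !mulmx_col2E /cross; ring.
have col1 i : cross e e' * M i 1 = e 0 0 * (M *m e') i 0 - e' 0 0 * (M *m e) i 0.
  by rewrite !mulmx_col2E /cross; ring.
by rewrite !col0 !col1 Me Me' !mxE; split; ring.
Qed.

Lemma mxtrace2_mul_eigen (A B : 'M[T]_2) e e' f f' l l' m m' :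
  A *m e = l *: e -> A *m e' = l' *: e' -> B *m f = m *: f -> B *m f' = m' *: f' ->
  \tr (A *m B) * cross e e' * cross f f' =
  (l * m + l' * m') * cross e e' * cross f f' - (l - l') * (m - m') * cross e f * cross e' f'.
Proof.
move=> Ae Ae' Bf Bf'.
have [a00 a01 a10 a11] := mx2_eigen_entries Ae Ae'.
have [b00 b01 b10 b11] := mx2_eigen_entries Bf Bf'.
transitivity ((cross e e' * A 0 0) * (cross f f' * B 0 0)
  + (cross e e' * A 0 1) * (cross f f' * B 1 0)
  + (cross e e' * A 1 0) * (cross f f' * B 0 1)
  + (cross e e' * A 1 1) * (cross f f' * B 1 1)).
  by rewrite mxtrace2 !mulmx2E; ring.
by rewrite a00 a01 a10 a11 b00 b01 b10 b11 /cross; ring.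
Qed.

Lemma mxtrace2_mul_transvection (A B : 'M[T]_2) e k f f' m m' :
  (forall w, A *m w = w + (k * cross e w) *: e) -> B *m f = m *: f -> B *m f' = m' *: f' ->
  (\tr (A *m B) - \tr B) * cross f f' = - k * cross f e * cross e f' * (m - m').
Proof.
move=> Aw Bf Bf'.
have [b00 b01 b10 b11] := mx2_eigen_entries Bf Bf'.
have Aij i j : A i j = (i == j)%:R + k * cross e (delta_mx j 0) * e i 0.
  by have := congr1 (fun v : 'cV[T]_2 => v i 0) (Aw (delta_mx j 0)); rewrite -colE !mxE eqxx andbT.
transitivity ((A 0 0 - 1) * (cross f f' * B 0 0) + A 0 1 * (cross f f' * B 1 0)
  + A 1 0 * (cross f f' * B 0 1) + (A 1 1 - 1) * (cross f f' * B 1 1)).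
  by rewrite !mxtrace2 !mulmx2E; ring.
by rewrite b00 b01 b10 b11 !Aij /cross !mxE /=; ring.
Qed.

End EigenTraces.

Lemma hvec_neq0 p : hvec p != 0.
Proof.
apply/eqP => /matrixP; case: p => [a|]; [move/(_ 1 0) | move/(_ 0 0)];
  by rewrite !mxE /= => /eqP; rewrite oner_eq0.
Qed.

Lemma proj_hvec p : proj (hvec p) = p.
Proof. by case: p => [a|]; rewrite /proj !mxE /= ?oner_eq0 ?divr1 ?eqxx. Qed.

Lemma hvec_proj v : v != 0 -> exists2 c : R, c != 0 & hvec (proj v) = c *: v.
Proof.
move=> v_neq0; rewrite /proj; case: eqP => [v1|/eqP v1].
  have v0 : v 0 0 != 0 by case: (col2_neq0 v_neq0); rewrite ?v1 ?eqxx.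
  by exists (v 0 0)^-1; rewrite ?invr_eq0 //; apply: col2P; rewrite !mxE /= ?v1 ?mulr0 ?mulVf.
exists (v 1 0)^-1; rewrite ?invr_eq0 //.
by apply: col2P; rewrite !mxE /= ?mulVf // mulrC.
Qed.

Lemma cross_hvec_eq0 x y : cross (hvec x) (hvec y) = 0 -> x = y.
Proof.
by case: x => [a|]; case: y => [b|]; rewrite /cross !mxE /= => h;
  [congr Some; lra | exfalso; lra | exfalso; lra |].
Qed.

Lemma mob_hvec (F : mat) z : inSL2Z F ->
  exists2 c : R, c != 0 & hvec (mob F z) = c *: (rmat F *m hvec z).
Proof.
move=> dF; apply: hvec_proj; apply/negP => /eqP /(congr1 (mulmx (invmx (rmat F)))).
rewrite mulmxA mulVmx ?unitmx_rmat // mul1mx mulmx0 => /eqP.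
by rewrite (negbTE (hvec_neq0 z)).
Qed.

Lemma in_arcE x y z : x != y ->
  in_arc x y z = (0 <= orient (hvec x) (hvec z) (hvec y)).
Proof.
rewrite /in_arc /orient /cross.
case: x => [a|]; case: y => [b|]; case: z => [c|] //= neq; rewrite !mxE /=.
- have [lt_ab|lt_ba|eq_ab] := ltrgtP a b; last by rewrite eq_ab eqxx in neq.
  + rewrite pmulr_lge0; last lra.
    apply/andP/idP => [[? ?]|?]; first nra.
    by split; rewrite real_leNgt ?num_real //; apply/negP => ?; nra.
  + rewrite nmulr_lge0; last lra.
    apply/orP/idP => [[?|?]|?]; [nra | nra |].
    have [?|?] := lerP a c; [by left | right].
    by rewrite real_leNgt ?num_real //; apply/negP => ?; nra.
- have [lt_ab|lt_ba|eq_ab] := ltrgtP a b; last by rewrite eq_ab eqxx in neq.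
  + by apply/esym/negbTE; rewrite -ltNge; lra.
  + by apply/esym; lra.
- by rewrite andbT; apply/idP/idP => ?; lra.
- by apply/esym; lra.
- by apply/idP/idP => ?; lra.
- by apply/esym; lra.
Qed.

(* By [in_arcE], [0 <= orient u w v] says that [w] lies on the arc from [u] to [v]. *)
Definition preserves_arc (M : 'M[R]_2) (u v : 'cV[R]_2) :=
  forall w, 0 <= orient u w v -> 0 <= orient u (M *m w) v.

Lemma arc_inv_preserves (F G : mat) x y : inSL2Z F -> inSL2Z G -> x != y ->
  preserves_arc (rmat F) (hvec x) (hvec y) -> preserves_arc (rmat G) (hvec x) (hvec y) ->
  arc_inv F G x y.
Proof.
move=> dF dG neq pF pG z; rewrite !in_arcE // => zxy.
have [cF _ ->] := mob_hvec z dF; have [cG _ ->] := mob_hvec z dG.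
by split; rewrite orientZ mulr_ge0 ?sqr_ge0 // ?pF ?pG.
Qed.

(* The sign of [c h] tells which of the two arcs between [e] and [h] is mapped
   into itself by [M]. *)
Definition invariant_arcs (M : 'M[R]_2) (e : 'cV[R]_2) (c : 'cV[R]_2 -> R) :=
  forall h, (c h <= 0 -> preserves_arc M e h) /\ (0 <= c h -> preserves_arc M h e).

Lemma invariant_arcs_eigen (M : 'M[R]_2) e e' l l' :
  M *m e = l *: e -> M *m e' = l' *: e' -> 0 <= l' <= l -> cross e e' != 0 ->
  invariant_arcs M e (orient e e').
Proof.
move=> Me Me' /andP[l'_ge0 l'_le] ee'_neq0.
have key w h : orient e (M *m w) h * cross e e' ^+ 2 =
    l * l' * orient e w h * cross e e' ^+ 2 - l' * (l - l') * cross e w ^+ 2 * orient e e' h.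
  have : cross e e' *: (M *m w) = (cross w e' * l) *: e + (cross e w * l') *: e'.
    by rewrite scalemxAr cross_decomp mulmxDr -!scalemxAr Me Me' !scalerA.
  move=> /(congr1 (fun v => orient e v h)); rewrite orientZ mulrC => ->.
  by rewrite /orient /cross !mxE; ring.
have ee'2_gt0 : 0 < cross e e' ^+ 2 by rewrite exprn_even_gt0.
have l_ge0 : 0 <= l := le_trans l'_ge0 l'_le.
have coef_ge0 w : 0 <= l' * (l - l') * cross e w ^+ 2.
  by rewrite mulr_ge0 ?sqr_ge0 // mulr_ge0 // subr_ge0.
move=> h; split=> ch w hw.
- rewrite -(pmulr_lge0 _ ee'2_gt0) key subr_ge0.
  apply: (@le_trans _ _ 0); first exact: mulr_ge0_le0.
  by rewrite mulr_ge0 ?sqr_ge0 // mulr_ge0 // mulr_ge0.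
- rewrite orient_swap oppr_ge0 -(pmulr_lle0 _ ee'2_gt0) key subr_le0.
  rewrite orient_swap oppr_ge0 in hw.
  apply: (@le_trans _ _ 0); last exact: mulr_ge0.
  by rewrite mulr_le0_ge0 ?sqr_ge0 // mulr_ge0_le0 // mulr_ge0.
Qed.

Lemma invariant_arcs_transvection (M : 'M[R]_2) e (k : R) :
  (forall w, M *m w = w + (k * cross e w) *: e) -> invariant_arcs M e (fun _ => k).
Proof.
move=> Mw h; have key w : orient e (M *m w) h = orient e w h - k * (cross e w * cross e h) ^+ 2.
  by rewrite Mw /orient /cross !mxE; ring.
split=> hk w hw.
  by rewrite key subr_ge0 (le_trans (mulr_le0_ge0 hk (sqr_ge0 _))).
rewrite orient_swap oppr_ge0 key subr_le0 (le_trans _ (mulr_ge0 hk (sqr_ge0 _))) //.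
by rewrite orient_swap oppr_ge0 in hw.
Qed.

Lemma I_exists_invariant_arcs (F G : mat) x y cF cG :
  inSL2Z F -> inSL2Z G ->
  invariant_arcs (rmat F) (hvec x) cF -> invariant_arcs (rmat G) (hvec y) cG ->
  cF (hvec y) * cG (hvec x) <= 0 ->
  x = y \/ arc_inv F G x y \/ arc_inv F G y x.
Proof.
move=> dF dG arcsF arcsG sign; have [-> | neq] := eqVneq x y; [by left | right].
have [F_xy F_yx] := arcsF (hvec y); have [G_yx G_xy] := arcsG (hvec x).
have yx : y != x by rewrite eq_sym.
have [cF_le0 | cF_gt0] := lerP (cF (hvec y)) 0.
  have [cG_ge0 | cG_lt0] := lerP 0 (cG (hvec x)).
    by left; exact: arc_inv_preserves dF dG neq (F_xy cF_le0) (G_xy cG_ge0).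
  have cF_ge0 : 0 <= cF (hvec y) by rewrite -(nmulr_lle0 _ cG_lt0).
  by right; exact: arc_inv_preserves dF dG yx (F_yx cF_ge0) (G_yx (ltW cG_lt0)).
have cG_le0 : cG (hvec x) <= 0 by rewrite -(pmulr_rle0 _ cF_gt0).
by right; exact: arc_inv_preserves dF dG yx (F_yx (ltW cF_gt0)) (G_yx cG_le0).
Qed.

Lemma eigen_hvec_proj (M : 'M[R]_2) (v : 'cV[R]_2) l : v != 0 -> M *m v = l *: v ->
  M *m hvec (proj v) = l *: hvec (proj v).
Proof.
by move=> v_neq0 Mv; have [c _ ->] := hvec_proj v_neq0; rewrite -scalemxAr Mv !scalerA mulrC.
Qed.

Lemma sl2_eigen_gt0 (A : mat) (v : 'cV[R]_2) l : inSL2Z A -> 2 < \tr (rmat A) ->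
  v != 0 -> rmat A *m v = l *: v -> 0 < l.
Proof. by move=> dA trA v_neq0 /(eigen_char2 v_neq0); rewrite det_rmat1 //; nra. Qed.

Lemma attr_eigen (A : mat) x : inSL2Z A -> 2 < \tr (rmat A) -> attr A x ->
  exists2 l, rmat A *m hvec x = l *: hvec x & 1 < l.
Proof.
move=> dA trA [[pA _] | [v [l [v_neq0 [Av [l_gt1 ->]]]]]].
  by move: trA; rewrite mxtrace_rmat pA; lra.
exists l; first exact: eigen_hvec_proj.
by rewrite -(ger0_norm (ltW (sl2_eigen_gt0 dA trA v_neq0 Av))).
Qed.

Lemma rep_eigen (A : mat) x : inSL2Z A -> 2 < \tr (rmat A) -> rep A x ->
  exists2 l, rmat A *m hvec x = l *: hvec x & 0 < l < 1.
Proof.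
move=> dA trA [[pA _] | [v [l [v_neq0 [Av [l_lt1 ->]]]]]].
  by move: trA; rewrite mxtrace_rmat pA; lra.
have l_gt0 := sl2_eigen_gt0 dA trA v_neq0 Av.
by exists l; [exact: eigen_hvec_proj | rewrite l_gt0 -(ger0_norm (ltW l_gt0))].
Qed.

Lemma attr_parabolic (A : mat) x : inSL2Z A -> parabolic A -> attr A x ->
  (forall q, fixedpt A q <-> q = x) /\ rmat A *m hvec x = hvec x.
Proof.
move=> dA pA attrx.
have eigen1 (v : 'cV[R]_2) l : v != 0 -> rmat A *m v = l *: v -> l = 1.
  move=> v_neq0 /(eigen_char2 v_neq0); rewrite det_rmat1 // mxtrace_rmat pA => char.
  by apply/eqP; rewrite -subr_eq0 -sqrf_eq0; apply/eqP; rewrite -char; ring.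
case: attrx => [[_ fixE] | [v [l [v_neq0 [Av [l_gt1 _]]]]]]; last first.
  by move: l_gt1; rewrite (eigen1 _ _ v_neq0 Av) normr1 ltxx.
split=> //; have [c c_neq0] := mob_hvec x dA; rewrite (proj2 (fixE x) erefl) => Ex.
have Ax : rmat A *m hvec x = c^-1 *: hvec x by rewrite {2}Ex scalerA mulVf // scale1r.
by rewrite Ax (eigen1 _ _ (hvec_neq0 x) Ax) scale1r.
Qed.

Lemma transvection_of_fixed (M : 'M[R]_2) x : \tr M = 2 -> M *m hvec x = hvec x ->
  exists k, forall w, M *m w = w + (k * cross (hvec x) w) *: hvec x.
Proof.
rewrite mxtrace2 => trM Mx.
have e0 := congr1 (fun v : 'cV[R]_2 => v 0 0) Mx; have e1 := congr1 (fun v : 'cV[R]_2 => v 1 0) Mx.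
move: e0 e1; rewrite /= !mulmx_col2E; case: x {Mx} => [a|]; rewrite !mxE /= => e0 e1.
- have h11 : M 1 1 = 1 - M 1 0 * a by lra.
  have h00 : M 0 0 = 1 + a * M 1 0 by lra.
  have h01 : M 0 1 = a - M 0 0 * a by lra.
  exists (- M 1 0) => w; apply: col2P; rewrite mulmx_col2E /cross !mxE /=.
    by rewrite h01 h00; ring.
  by rewrite h11; ring.
- have [h00 h10 h11] : [/\ M 0 0 = 1, M 1 0 = 0 & M 1 1 = 1] by split; lra.
  by exists (M 0 1) => w; apply: col2P; rewrite mulmx_col2E /cross !mxE /= ?h00 ?h10 ?h11; ring.
Qed.

Lemma cross_hvec_eigen_neq0 (M : 'M[R]_2) x y a b :
  M *m hvec x = a *: hvec x -> M *m hvec y = b *: hvec y -> a != b -> cross (hvec x) (hvec y) != 0.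
Proof.
move=> Mx My; apply: contraNneq => /cross_hvec_eq0 exy; move: My; rewrite -exy Mx => /eqP.
by rewrite -subr_eq0 -scalerBl scaler_eq0 subr_eq0 (negbTE (hvec_neq0 x)) orbF.
Qed.

Lemma attr_invmx_eigen (F : mat) y m : inSL2Z F ->
  rmat F *m hvec y = m *: hvec y -> 0 < m < 1 -> attr (invmx F) y.
Proof.
move=> dF Fy /andP[m_gt0 m_lt1]; right; exists (hvec y), m^-1.
rewrite hvec_neq0 rmat_invmx // (eigen_invmx (unitmx_rmat dF) Fy) ?lt0r_neq0 // proj_hvec.
by rewrite ger0_norm ?invr_ge0 ?ltW // invf_gt1.
Qed.

Lemma rep_invmx_eigen (F : mat) y m : inSL2Z F ->
  rmat F *m hvec y = m *: hvec y -> 1 < m -> rep (invmx F) y.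
Proof.
move=> dF Fy m_gt1; have m_gt0 : 0 < m by lra.
right; exists (hvec y), m^-1.
rewrite hvec_neq0 rmat_invmx // (eigen_invmx (unitmx_rmat dF) Fy) ?lt0r_neq0 // proj_hvec.
by rewrite ger0_norm ?invr_ge0 ?ltW // invf_lt1.
Qed.

Lemma trace_bounds_of_eigenvalues (T : realFieldType) (l l' m m' z : T) :
  1 < l -> 1 < m -> l * l' = 1 -> m * m' = 1 -> l * m + l' * m' <= z ->
  let r := z - (l + l') - (m + m') + 2 in 0 < r /\ 4 * (l + l' - 2) * (m + m' - 2) <= r ^+ 2.
Proof.
move=> l_gt1 m_gt1 ll' mm' z_ge r.
have l'_gt0 : 0 < l' by nra.
have m'_gt0 : 0 < m' by nra.
have l'_lt1 : l' < 1 by nra.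
have m'_lt1 : m' < 1 by nra.
set r1 := (l - 1) * (m - 1) + (l' - 1) * (m' - 1).
have r1_gt0 : 0 < r1 by rewrite /r1; nra.
have r1_le : r1 <= r by rewrite /r /r1; lra.
have disc : r1 ^+ 2 - 4 * (l + l' - 2) * (m + m' - 2) = ((l - 1) * (m - 1) * (1 - l' * m')) ^+ 2.
  have l_neq0 : l != 0 by rewrite gt_eqF // (lt_trans ltr01).
  have m_neq0 : m != 0 by rewrite gt_eqF // (lt_trans ltr01).
  rewrite /r1 -[l'](mulKf l_neq0) -[m'](mulKf m_neq0) ll' mm' !mulr1.
  by field; rewrite l_neq0 m_neq0.
split; first lra.
have := sqr_ge0 ((l - 1) * (m - 1) * (1 - l' * m')); rewrite -disc; nra.
Qed.

(** * Well-oriented pairs *)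

Lemma coherently_oriented_invmx (A B : mat) x x' y y' cA cA' m m' :
  inSL2Z A -> inSL2Z B -> attr A x -> rep A x' ->
  invariant_arcs (rmat A) (hvec x) cA -> invariant_arcs (rmat (invmx A)) (hvec x') cA' ->
  rmat B *m hvec y = m *: hvec y -> rmat B *m hvec y' = m' *: hvec y' -> 1 < m -> 0 < m' < 1 ->
  cA (hvec y') * orient (hvec y') (hvec y) (hvec x) <= 0 ->
  cA' (hvec y) * orient (hvec y) (hvec y') (hvec x') <= 0 ->
  coherently_oriented A (invmx B).
Proof.
move=> dA dB attrx repx' arcsA arcsA' By By' m_gt1 m'_range sign sign'.
have /andP[m'_gt0 m'_lt1] := m'_range.
have yy' : cross (hvec y) (hvec y') != 0.
  by apply: cross_hvec_eigen_neq0 By By' _; rewrite gt_eqF ?(lt_trans m'_lt1).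
have m_gt0 : 0 < m := lt_trans ltr01 m_gt1.
have m'_le_m : 0 <= m' <= m by rewrite !ltW // (lt_trans m'_lt1).
have arcsB : invariant_arcs (rmat (invmx (invmx B))) (hvec y) (orient (hvec y) (hvec y')).
  by rewrite invmxK; exact: invariant_arcs_eigen By By' m'_le_m yy'.
have arcsB' : invariant_arcs (rmat (invmx B)) (hvec y') (orient (hvec y') (hvec y)).
  have uB := unitmx_rmat dB.
  have inv_le : 0 <= m^-1 <= m'^-1.
    by rewrite invr_ge0 ltW //= lef_pV2 ?posrE // ltW // (lt_trans m'_lt1).
  have y'y : cross (hvec y') (hvec y) != 0 by rewrite cross_anti oppr_eq0.
  rewrite rmat_invmx //.
  exact: invariant_arcs_eigen (eigen_invmx uB By' (lt0r_neq0 m'_gt0))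
    (eigen_invmx uB By (lt0r_neq0 m_gt0)) inv_le y'y.
have [dA' dB'] := (inSL2Z_invmx dA, inSL2Z_invmx dB).
split.
  exists x, y'; split=> //; split; first exact: attr_invmx_eigen dB By' m'_range.
  exact: I_exists_invariant_arcs dA dB' arcsA arcsB' sign.
exists x', y; split=> //; split; first exact: rep_invmx_eigen dB By m_gt1.
exact: I_exists_invariant_arcs dA' (inSL2Z_invmx dB') arcsA' arcsB sign'.
Qed.

Lemma hyperbolic_eigen_trace_le (A B : mat) x x' y y' l l' m m' :
  inSL2Z A -> inSL2Z B -> ~ coherently_oriented A (invmx B) -> attr A x -> rep A x' ->
  rmat A *m hvec x = l *: hvec x -> rmat A *m hvec x' = l' *: hvec x' -> 1 < l -> 0 < l' < 1 ->
  rmat B *m hvec y = m *: hvec y -> rmat B *m hvec y' = m' *: hvec y' -> 1 < m -> 0 < m' < 1 ->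
  l * m + l' * m' <= \tr (rmat A *m rmat B).
Proof.
move=> dA dB not_coh attrx repx' Ax Ax' l_gt1 /andP[l'_gt0 l'_lt1] By By' m_gt1 m'_range.
have /andP[m'_gt0 m'_lt1] := m'_range.
set e := hvec x; set e' := hvec x'; set f := hvec y; set f' := hvec y'.
have ee' : cross e e' != 0.
  by apply: cross_hvec_eigen_neq0 Ax Ax' _; rewrite gt_eqF // (lt_trans l'_lt1).
have ff' : cross f f' != 0.
  by apply: cross_hvec_eigen_neq0 By By' _; rewrite gt_eqF // (lt_trans m'_lt1).
set S := cross e f * cross e' f' * cross e e' * cross f f'.
have S_le0 : S <= 0.
  rewrite leNgt; apply/negP => S_gt0; apply: not_coh.
  have l_gt0 : 0 < l := lt_trans ltr01 l_gt1.
  have l'_le_l : 0 <= l' <= l by rewrite !ltW // (lt_trans l'_lt1).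
  have arcsA := invariant_arcs_eigen Ax Ax' l'_le_l ee'.
  have uA := unitmx_rmat dA.
  have arcsA' : invariant_arcs (rmat (invmx A)) e' (orient e' e).
    rewrite rmat_invmx //.
    apply: invariant_arcs_eigen (eigen_invmx uA Ax' (lt0r_neq0 l'_gt0))
      (eigen_invmx uA Ax (lt0r_neq0 l_gt0)) _ _.
      by rewrite invr_ge0 ltW //= lef_pV2 ?posrE // ltW // (lt_trans l'_lt1).
    by rewrite cross_anti oppr_eq0.
  apply: coherently_oriented_invmx dA dB attrx repx' arcsA arcsA' By By' m_gt1 m'_range _ _.
  - have -> : orient e e' f' * orient f' f e = - S * cross e f' ^+ 2.
      by rewrite /orient /S /cross; ring.
    by rewrite mulNr oppr_le0 mulr_ge0 ?sqr_ge0 ?ltW.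
  - have -> : orient e' e f * orient f f' e' = - S * cross e' f ^+ 2.
      by rewrite /orient /S /cross; ring.
    by rewrite mulNr oppr_le0 mulr_ge0 ?sqr_ge0 ?ltW.
set z := \tr (rmat A *m rmat B).
have key : (z - (l * m + l' * m')) * (cross e e' * cross f f') ^+ 2 = - ((l - l') * (m - m')) * S.
  transitivity ((z * cross e e' * cross f f' - (l * m + l' * m') * cross e e' * cross f f')
    * (cross e e' * cross f f')); first by ring.
  by rewrite (mxtrace2_mul_eigen Ax Ax' By By') /S; ring.
have lm_gt0 : 0 < (l - l') * (m - m').
  by rewrite mulr_gt0 // subr_gt0 ?(lt_trans l'_lt1) ?(lt_trans m'_lt1).
have sq_gt0 : 0 < (cross e e' * cross f f') ^+ 2 by rewrite exprn_even_gt0 ?mulf_neq0.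
rewrite -subr_ge0 -(pmulr_lge0 _ sq_gt0).
by rewrite key mulr_le0 // oppr_le0 ltW.
Qed.

Lemma parabolic_trace_lt (A B : mat) x y y' m m' :
  inSL2Z A -> inSL2Z B -> parabolic A -> ~ coherently_oriented A (invmx B) -> attr A x ->
  rmat B *m hvec y = m *: hvec y -> rmat B *m hvec y' = m' *: hvec y' -> 1 < m -> 0 < m' < 1 ->
  \tr (rmat B) < \tr (rmat A *m rmat B).
Proof.
move=> dA dB pA not_coh attrx By By' m_gt1 m'_range.
have /andP[m'_gt0 m'_lt1] := m'_range.
have [fixE Ax] := attr_parabolic dA pA attrx.
have [k Aw] : exists k, forall w, rmat A *m w = w + (k * cross (hvec x) w) *: hvec x.
  by apply: transvection_of_fixed Ax; rewrite mxtrace_rmat pA.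
set O := orient (hvec y') (hvec y) (hvec x).
have kO_gt0 : 0 < k * O.
  rewrite ltNge; apply/negP => kO_le0; apply: not_coh.
  have arcsA' : invariant_arcs (rmat (invmx A)) (hvec x) (fun _ => - k).
    rewrite rmat_invmx //; exact/invariant_arcs_transvection/transvection_invmx/Aw/unitmx_rmat.
  apply: coherently_oriented_invmx (invariant_arcs_transvection Aw) arcsA'
    By By' m_gt1 m'_range _ _ => //.
    by left; split.
  by have -> : - k * orient (hvec y) (hvec y') (hvec x) = k * O by rewrite /O /orient /cross; ring.
have ff' : cross (hvec y) (hvec y') != 0.
  by apply: cross_hvec_eigen_neq0 By By' _; rewrite gt_eqF // (lt_trans m'_lt1).
have key : (\tr (rmat A *m rmat B) - \tr (rmat B)) * cross (hvec y) (hvec y') ^+ 2 =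
    k * O * (m - m').
  rewrite expr2 mulrA (mxtrace2_mul_transvection Aw By By') /O /orient /cross; ring.
rewrite -subr_gt0 -(pmulr_lgt0 _ (_ : 0 < cross (hvec y) (hvec y') ^+ 2)) ?exprn_even_gt0 //.
by rewrite key mulr_gt0 // subr_gt0 (lt_trans m'_lt1).
Qed.

Theorem well_oriented_trace_bounds (A B : mat) : inSL2Z A -> inSL2Z B ->
  2 <= \tr (rmat A) -> 2 < \tr (rmat B) -> well_oriented A B ->
  let r := \tr ((rmat A - 1%:M) *m (rmat B - 1%:M)) in
  0 < r /\ 4 * (\tr (rmat A) - 2) * (\tr (rmat B) - 2) <= r ^+ 2.
Proof.
move=> dA dB trA trB [[[x [y [attrx [attry _]]]] [x' [y' [repx' [repy' _]]]]] not_coh] r.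
have [m By m_gt1] := attr_eigen dB trB attry.
have [m' By' m'_range] := rep_eigen dB trB repy'.
have rE : r = \tr (rmat A *m rmat B) - \tr (rmat A) - \tr (rmat B) + 2 by rewrite /r mxtrace_mulB1.
move: trA; rewrite le_eqVlt => /orP[/eqP trA2 | trA].
  have pA : parabolic A by apply/parabolic_rmat.
  have := parabolic_trace_lt dA dB pA not_coh attrx By By' m_gt1 m'_range.
  by rewrite rE -trA2 subrr mulr0 mul0r sqr_ge0; split=> //; lra.
have [l Ax l_gt1] := attr_eigen dA trA attrx.
have [l' Ax' l'_range] := rep_eigen dA trA repx'.
have le_z := hyperbolic_eigen_trace_le dA dB not_coh attrx repx'
  Ax Ax' l_gt1 l'_range By By' m_gt1 m'_range.
have l_neq : l != l' by rewrite gt_eqF // (lt_trans _ l_gt1) //; case/andP: l'_range.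
have m_neq : m != m' by rewrite gt_eqF // (lt_trans _ m_gt1) //; case/andP: m'_range.
have [sA pA] := eigen_sum_prod (hvec_neq0 x) (hvec_neq0 x') Ax Ax' l_neq.
have [sB pB] := eigen_sum_prod (hvec_neq0 y) (hvec_neq0 y') By By' m_neq.
by rewrite rE -sA -sB; apply: trace_bounds_of_eigenvalues; rewrite ?pA ?pB ?det_rmat1.
Qed.

Lemma b_in_non_power (w : word) : ~ (exists n : nat, w = nseq n la) -> lb \in w.
Proof.
move=> not_pow; apply/negPn/negP => b_notin; apply: not_pow; exists (size w).
by elim: w b_notin => [|[] w IH] //=; rewrite inE negb_or => /andP[_ /IH <-].
Qed.

Theorem lemma5p2 (A B : mat) :
  inSL2Z A -> inSL2Z B -> A *m B <> B *m A ->
  well_oriented A B ->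
  2 <= \tr A -> \tr A < \tr B ->
  forall w u : word,
    (trw A B w < trw A B u <-> trw A B w <= trw A B u - 1) /\
    (subword u w ->
       ~ (parabolic A /\ exists n : nat, w = nseq n la) ->
       trw A B u < trw A B w).
Proof.
move=> dA dB _ wo trA trAB w u; split; first by lia.
case=> sub neq not_par_pow.
have trA' : 2 <= \tr (rmat A) by rewrite mxtrace_rmat -[2]/((2 : int)%:~R) ler_int.
have trB' : 2 < \tr (rmat B) by rewrite mxtrace_rmat -[2]/((2 : int)%:~R) ltr_int; lia.
have [r_gt0 disc] := well_oriented_trace_bounds dA dB trA' trB' wo.
rewrite -(ltr_int R) !trw_rmat.
apply: (sl2_mxtrace_wmx_subseq_lt (det_rmat1 dA) (det_rmat1 dB) trA' trB' r_gt0 disc _ sub neq).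
have [/parabolic_rmat pA | trA_neq2] := eqVneq (\tr (rmat A)) 2.
  by right; apply: b_in_non_power => pow; apply: not_par_pow.
by left; rewrite lt_neqAle eq_sym trA_neq2.
Qed.
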